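(* Let $G$ be a group and for $g\in G$ let $\mathcal{C}(G)_g=\mathcal{C}(G)\setminus\{\{g\}\}$ (the coset poset with the singleton coset $\{g\}$ removed). If for some $g\in G$ and some $n\geq 0$ we have $\tilde{H}_n(|\mathcal{C}(G)_g|;\mathbb{Z})=0$, then there is a surjection $\tilde{H}_{n+1}(|\mathcal{C}(G)|;\mathbb{Z})\twoheadrightarrow \tilde{H}_n(|L(G)|;\mathbb{Z})$.
   Context: For a group $G$, the coset poset $\mathcal{C}(G)$ is the set of left cosets of all proper subgroups of $G$ (including the trivial subgroup), ordered by inclusion; $L(G)$ is the poset of proper nontrivial subgroups of $G$ ordered by inclusion; $|P|$ denotes the geometric realization of the order complex (chains) of $P$; $\tilde H_*$ is reduced homology. *)

From HB Require Import structures.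
From mathcomp Require Import all_boot monoid ssralg ssrint.
From Stdlib Require Import ClassicalEpsilon.

Set Implicit Arguments.
Unset Strict Implicit.
Unset Printing Implicit Defensive.

Import GRing.Theory.

(* A k-element chain (a simplex of dimension k-1) is a list s of size k     *)
(* which is strictly increasing for lt; the empty chain (k = 0) is the      *)
(* (-1)-dimensional simplex of the augmented complex, so the homology of    *)
(* the resulting complex is the REDUCED homology.  Integral chains are      *)
(* represented as finite formal sums: lists of (coefficient, simplex).      *)

Section OrderComplex.

Variables (P : Type) (V : P -> Prop) (lt : P -> P -> Prop).
(* the poset is the set of x : P with V x, ordered strictly by lt *)

Fixpoint strict_chain (s : seq P) : Prop :=
  match s with
  | x :: ((y :: _) as t) => lt x y /\ strict_chain t
  | _ => True
  end.

Definition simplex (k : nat) (s : seq P) : Prop :=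
  size s = k /\ (forall x, List.In x s -> V x) /\ strict_chain s.

Definition fchain := seq (int * seq P).

Definition chain_of (k : nat) (c : fchain) : Prop :=
  forall p, List.In p c -> simplex k p.2.

Definition coef (c : fchain) (s : seq P) : int :=
  \sum_(p <- c) (if excluded_middle_informative (p.2 = s) then p.1 else 0%R).

Definition ch_eq (c d : fchain) : Prop := forall s, coef c s = coef d s.

Definition face (i : nat) (s : seq P) : seq P := take i s ++ drop i.+1 s.

Definition bd (c : fchain) : fchain :=
  flatten [seq [seq (((-1) ^+ i * p.1)%R, face i p.2) | i <- iota 0 (size p.2)]
          | p <- c].

Definition ch_opp (c : fchain) : fchain := [seq ((- p.1)%R, p.2) | p <- c].

Definition is_cycle (k : nat) (c : fchain) : Prop :=
  chain_of k c /\ ch_eq (bd c) [::].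

Definition homologous (k : nat) (c d : fchain) : Prop :=
  exists e, chain_of k.+1 e /\ ch_eq (c ++ ch_opp d) (bd e).

(* A reduced homology class in degree n (simplices with n+1 vertices):
   the set of all cycles homologous to a given cycle. *)
Definition is_hclass (n : nat) (C : fchain -> Prop) : Prop :=
  exists z, is_cycle n.+1 z /\
    forall w, C w <-> (is_cycle n.+1 w /\ homologous n.+1 w z).

Definition rhomology (n : nat) := { C : fchain -> Prop | is_hclass n C }.

Definition hadd (n : nat) (a b c : rhomology n) : Prop :=
  exists x y, proj1_sig a x /\ proj1_sig b y /\ proj1_sig c (x ++ y).

End OrderComplex.

Definition hom_surj (P Q : Type) (VP : P -> Prop) (ltP : P -> P -> Prop)
    (VQ : Q -> Prop) (ltQ : Q -> Q -> Prop) (m n : nat) : Prop :=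
  exists f : rhomology VP ltP m -> rhomology VQ ltQ n,
    (forall a b c, hadd a b c -> hadd (f a) (f b) (f c)) /\
    (forall b, exists a, f a = b).

Section Group.

Local Open Scope group_scope.

Variable G : groupType.

Definition is_subgroup (H : G -> Prop) : Prop :=
  H 1 /\ (forall x y, H x -> H y -> H (x * y)) /\ (forall x, H x -> H x^-1).

Definition is_proper_subgroup (H : G -> Prop) : Prop :=
  is_subgroup H /\ H <> (fun _ => True).

Definition lcoset (g : G) (H : G -> Prop) : G -> Prop :=
  fun x => exists2 h, H h & x = g * h.

(* elements of the coset poset C(G): left cosets of proper subgroups
   (the trivial subgroup included) *)
Definition is_coset (X : G -> Prop) : Prop :=
  exists g H, is_proper_subgroup H /\ X = lcoset g H.

Definition is_coset_minus (g : G) (X : G -> Prop) : Prop :=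
  is_coset X /\ X <> (fun x => x = g).

Definition is_proper_nontrivial_subgroup (H : G -> Prop) : Prop :=
  is_proper_subgroup H /\ H <> (fun x => x = 1).

(* strict inclusion: the order of all three posets *)
Definition sincl (X Y : G -> Prop) : Prop :=
  (forall x, X x -> Y x) /\ X <> Y.

End Group.

Definition rhomology_trivial (P : Type) (V : P -> Prop) (lt : P -> P -> Prop)
    (n : nat) : Prop :=
  forall z : seq (int * seq P), is_cycle V lt n.+1 z -> homologous V lt n.+1 z [::].

(* The singleton {g} is a minimal element of C(G), and X |-> g^-1 X identifies the
   cosets properly containing g with L(G).  Keeping the simplices of a chain that start
   at {g}, deleting {g} and translating by g^-1 anticommutes with the boundary, so it
   induces a homomorphism H_{n+1}(C(G)) -> H_n(L(G)) (the connecting map of the pair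
   (C(G), C(G)_g)).  It is onto when H_n(C(G)_g) = 0: a cycle w of L(G) translates to
   a cycle gw of C(G)_g, which bounds some e there, and then the cone from {g} over gw,
   minus e, is a cycle of C(G) that is mapped to w. *)

From mathcomp Require Import all_boot monoid ssralg ssrint.
From Stdlib Require Import ClassicalEpsilon FunctionalExtensionality.
From Stdlib Require Import PropExtensionality ProofIrrelevance.

Set Implicit Arguments.
Unset Strict Implicit.
Unset Printing Implicit Defensive.

Import GRing.Theory.

Lemma if_em_iff (A B : Prop) (T : Type) (x y : T) : (A <-> B) ->
  (if excluded_middle_informative A then x else y) =
  (if excluded_middle_informative B then x else y).
Proof.
move=> AB; case: excluded_middle_informative => [a|na];
  case: excluded_middle_informative => [b|nb] //; by [case: nb; apply/AB | case: na; apply/AB].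
Qed.

Lemma if_emF (A : Prop) (T : Type) (x y : T) :
  ~ A -> (if excluded_middle_informative A then x else y) = y.
Proof. by case: excluded_middle_informative. Qed.

Section ChainAlgebra.

Local Open Scope ring_scope.

Variable P : Type.
Implicit Types (c d e : fchain P) (s t : seq P).

Lemma coef_nil s : coef (P := P) [::] s = 0.
Proof. by rewrite /coef big_nil. Qed.

Lemma coef_cons p c s :
  coef (p :: c) s = (if excluded_middle_informative (p.2 = s) then p.1 else 0) + coef c s.
Proof. by rewrite /coef big_cons. Qed.

Lemma coef_cat c d s : coef (c ++ d) s = coef c s + coef d s.
Proof. by rewrite /coef big_cat. Qed.

Lemma ch_opp_cat c d : ch_opp (c ++ d) = ch_opp c ++ ch_opp d.
Proof. exact: map_cat. Qed.

Lemma coef_opp c s : coef (ch_opp c) s = - coef c s.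
Proof.
elim: c => [|p c IH]; first by rewrite coef_nil oppr0.
rewrite /= coef_cons IH coef_cons opprD.
by case: excluded_middle_informative; rewrite ?oppr0.
Qed.

Lemma bd_cons p c : bd (p :: c) = bd [:: p] ++ bd c.
Proof. by rewrite /bd /= cats0. Qed.

Lemma bd_cat c d : bd (c ++ d) = bd c ++ bd d.
Proof. by rewrite /bd map_cat flatten_cat. Qed.

Lemma bd_opp c : bd (ch_opp c) = ch_opp (bd c).
Proof.
elim: c => [|p c IH] //.
rewrite /= bd_cons IH [in RHS]bd_cons /ch_opp map_cat /bd /= !cats0 -map_comp.
by congr (_ ++ _); apply: eq_map => i /=; rewrite mulrN.
Qed.

Lemma In_face y i s : List.In y (face i s) -> List.In y s.
Proof.
elim: s i => [|x s IH] [|i] //=; rewrite /face /=.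
- by rewrite drop0 => Hy; right.
- by case=> [->|Hy]; [left | right; apply: (IH i)].
Qed.

Variables (V : P -> Prop) (lt : P -> P -> Prop).

Lemma chain_of_cat k c d : chain_of V lt k c -> chain_of V lt k d -> chain_of V lt k (c ++ d).
Proof. by move=> Hc Hd p /(@List.in_app_or _ c d) []; [apply: Hc|apply: Hd]. Qed.

Lemma chain_of_opp k c : chain_of V lt k c -> chain_of V lt k (ch_opp c).
Proof. by move=> Hc p /(List.in_map_iff _ c) [q [<- Hq]]; exact: (Hc q Hq). Qed.

Lemma chain_of_sub (V' : P -> Prop) k c :
  (forall x, V x -> V' x) -> chain_of V lt k c -> chain_of V' lt k c.
Proof. by move=> VV' Hc p /Hc [sz [Vp Hp]]; split=> //; split=> // x /Vp /VV'. Qed.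

Lemma homologous_refl k c : homologous V lt k c c.
Proof.
exists [::]; split=> [p []|s].
by rewrite coef_cat coef_opp subrr coef_nil.
Qed.

Lemma homologous_sym k c d : homologous V lt k c d -> homologous V lt k d c.
Proof.
case=> e [He Hcd]; exists (ch_opp e); split; first exact: chain_of_opp.
move=> s; move: (Hcd s); rewrite bd_opp !coef_cat !coef_opp => <-.
by rewrite opprD opprK addrC.
Qed.

Lemma homologous_trans k c d e :
  homologous V lt k c d -> homologous V lt k d e -> homologous V lt k c e.
Proof.
case=> e1 [He1 H1] [e2 [He2 H2]]; exists (e1 ++ e2); split; first exact: chain_of_cat.
move=> s; move: (H1 s) (H2 s); rewrite bd_cat !coef_cat !coef_opp => <- <-.
by rewrite addrA subrK.
Qed.

End ChainAlgebra.

Definition ch_map (P Q : Type) (f : P -> Q) (c : fchain P) : fchain Q :=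
  [seq (p.1, map f p.2) | p <- c].

Section ChainMap.

Variables (P Q : Type) (f : P -> Q).
Implicit Types (c d : fchain P) (s : seq P).

Lemma ch_map_cat c d : ch_map f (c ++ d) = ch_map f c ++ ch_map f d.
Proof. exact: map_cat. Qed.

Lemma ch_map_opp c : ch_map f (ch_opp c) = ch_opp (ch_map f c).
Proof. by rewrite /ch_map /ch_opp -!map_comp. Qed.

Lemma face_map i s : face i (map f s) = map f (face i s).
Proof. by rewrite /face map_cat map_take map_drop. Qed.

Lemma bd_map c : bd (ch_map f c) = ch_map f (bd c).
Proof.
elim: c => [|[x s] c IH] //.
rewrite (bd_cons (x, map f s)) IH [in RHS]bd_cons ch_map_cat; congr (_ ++ _).
rewrite /bd /ch_map /= !cats0 -map_comp size_map.
by apply: eq_map => i /=; rewrite face_map.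
Qed.

Lemma ch_mapK (f' : Q -> P) :
  cancel f f' -> cancel (ch_map f) (ch_map f').
Proof.
move=> fK c; rewrite /ch_map -map_comp -[RHS]map_id.
by apply: eq_map => -[x s] /=; rewrite mapK.
Qed.

Lemma coef_map (f' : Q -> P) :
  cancel f f' -> cancel f' f -> forall c (u : seq Q), coef (ch_map f c) u = coef c (map f' u).
Proof.
move=> fK f'K; elim=> [|p c IH] u; first by rewrite !coef_nil.
rewrite /= !coef_cons IH; congr (_ + _)%R; apply: if_em_iff.
by split=> [<-|->] /=; [rewrite (mapK fK) | rewrite (mapK f'K)].
Qed.

Lemma ch_map_eq (f' : Q -> P) : cancel f f' -> cancel f' f ->
  forall c d, ch_eq c d -> ch_eq (ch_map f c) (ch_map f d).
Proof. by move=> fK f'K c d cd u; rewrite !(coef_map fK f'K). Qed.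

Variables (VP : P -> Prop) (ltP : P -> P -> Prop) (VQ : Q -> Prop) (ltQ : Q -> Q -> Prop).
Hypothesis f_mono : forall x y, ltP x y -> ltQ (f x) (f y).

Lemma strict_chain_map s : strict_chain ltP s -> strict_chain ltQ (map f s).
Proof. by elim: s => [|x [|y t] IH] //= [lt_xy Hc]; split; [apply: f_mono | apply: IH]. Qed.

Lemma simplex_map k s : (forall x, List.In x s -> VQ (f x)) ->
  simplex VP ltP k s -> simplex VQ ltQ k (map f s).
Proof.
move=> VQf [<- [_ Hs]]; split; first exact: size_map.
split; last exact: strict_chain_map.
by move=> y /List.in_map_iff [x [<- Hx]]; apply: VQf.
Qed.

Lemma chain_of_map k c : (forall x, VP x -> VQ (f x)) ->
  chain_of VP ltP k c -> chain_of VQ ltQ k (ch_map f c).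
Proof.
move=> VQf Hc p /List.in_map_iff [q [<- Hq]].
by apply: simplex_map (Hc q Hq) => x Hx; apply/VQf/((Hc q Hq).2.1 x Hx).
Qed.

End ChainMap.

Section Simplices.

Variables (P : Type) (V : P -> Prop) (lt : P -> P -> Prop).
Hypothesis lt_trans : forall x y z, lt x y -> lt y z -> lt x z.

Lemma strict_chain_behead s : strict_chain lt s -> strict_chain lt (behead s).
Proof. by case: s => [|x [|y t]] //= []. Qed.

Lemma strict_chain_head_lt x t y : strict_chain lt (x :: t) -> List.In y t -> lt x y.
Proof.
elim: t x => [|z t IH] x //= [lt_xz Hc] [<-|Hy] //.
exact: lt_trans lt_xz (IH z Hc Hy).
Qed.

Lemma simplex_cons k x s :
  V x -> (forall y, List.In y s -> lt x y) -> simplex V lt k s -> simplex V lt k.+1 (x :: s).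
Proof.
move=> Vx above [<- [Vs Hs]]; split=> //; split; first by move=> y /= [<-|/Vs].
by case: s above Hs {Vs} => [|y t] //= above Hs; split=> //; apply: above; left.
Qed.

Lemma simplex_behead k x t : simplex V lt k.+1 (x :: t) ->
  [/\ simplex V lt k t, V x & forall y, List.In y t -> lt x y].
Proof.
move=> [[<-] [Vs Hs]]; split; last by move=> y; apply: strict_chain_head_lt Hs.
- by split=> //; split; [move=> y Hy; apply: Vs; right | exact: strict_chain_behead Hs].
- by apply: Vs; left.
Qed.

Lemma minimal_notin_behead k v s :
  (forall x, V x -> ~ lt x v) -> simplex V lt k s -> ~ List.In v (behead s).
Proof.
move=> v_min [_ [Vs Hs]]; case: s Vs Hs => [|x t] Vs Hs Hv; first by case: Hv.
by apply: (v_min x); [apply: Vs; left | exact: strict_chain_head_lt Hs Hv].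
Qed.

End Simplices.

Section HomologyClasses.

Variables (P : Type) (V : P -> Prop) (lt : P -> P -> Prop) (n : nat).
Implicit Types (a b : rhomology V lt n) (z w : fchain P).

Lemma hclass_cycle a z : proj1_sig a z -> is_cycle V lt n.+1 z.
Proof. by case: a => A [z0 [_ HA]] /= /HA []. Qed.

Definition hclass_of z (Hz : is_cycle V lt n.+1 z) : rhomology V lt n :=
  exist _ (fun w => is_cycle V lt n.+1 w /\ homologous V lt n.+1 w z)
    (ex_intro _ z (conj Hz (fun w => iff_refl _))).

Lemma hclass_of_self z (Hz : is_cycle V lt n.+1 z) : proj1_sig (hclass_of Hz) z.
Proof. by split; last exact: homologous_refl. Qed.

Lemma hclass_eq a b z : proj1_sig a z -> proj1_sig b z -> a = b.
Proof.
case: a => A HA; case: b => B HB /= Az Bz.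
suff eqAB : A = B by subst B; congr exist; exact: proof_irrelevance.
have [za [_ HA']] := HA; have [zb [_ HB']] := HB.
have [_ z_za] := (HA' z).1 Az; have [_ z_zb] := (HB' z).1 Bz.
apply: functional_extensionality => w; apply: propositional_extensionality.
rewrite HA' HB'; split=> -[Hw Hhom]; split=> //.
- exact: homologous_trans Hhom (homologous_trans (homologous_sym z_za) z_zb).
- exact: homologous_trans Hhom (homologous_trans (homologous_sym z_zb) z_za).
Qed.

End HomologyClasses.

Section InducedMap.

Variables (P Q : Type) (VP : P -> Prop) (ltP : P -> P -> Prop).
Variables (VQ : Q -> Prop) (ltQ : Q -> Q -> Prop) (m n : nat).
Variable f : fchain P -> fchain Q.
Hypothesis f_cat : forall c d, f (c ++ d) = f c ++ f d.
Hypothesis f_cycle : forall z, is_cycle VP ltP m.+1 z -> is_cycle VQ ltQ n.+1 (f z).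
Hypothesis f_homologous : forall z z',
  homologous VP ltP m.+1 z z' -> homologous VQ ltQ n.+1 (f z) (f z').

Definition induced_class (a : rhomology VP ltP m) (w : fchain Q) : Prop :=
  is_cycle VQ ltQ n.+1 w /\ exists2 z, proj1_sig a z & homologous VQ ltQ n.+1 w (f z).

Lemma induced_class_hclass a : is_hclass VQ ltQ n (induced_class a).
Proof.
case: a => A [z0 [Hz0 HA]]; exists (f z0); split; first exact: f_cycle.
move=> w; split=> -[Hw Hhom]; split=> //.
- case: Hhom => z /HA [_ z_z0] w_fz.
  exact: homologous_trans w_fz (f_homologous z_z0).
- by exists z0 => //; apply/HA; split; last exact: homologous_refl.
Qed.

Definition induced (a : rhomology VP ltP m) : rhomology VQ ltQ n :=
  exist _ (induced_class a) (induced_class_hclass a).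

Lemma induced_mem a z : proj1_sig a z -> proj1_sig (induced a) (f z).
Proof.
move=> Az; split; first exact/f_cycle/(hclass_cycle Az).
by exists z => //; exact: homologous_refl.
Qed.

Lemma induced_hadd a b c : hadd a b c -> hadd (induced a) (induced b) (induced c).
Proof.
case=> x [y [Ax [By Cxy]]]; exists (f x), (f y).
by rewrite -f_cat; split; [|split]; apply: induced_mem.
Qed.

Lemma induced_surj :
  (forall w, is_cycle VQ ltQ n.+1 w -> exists2 z, is_cycle VP ltP m.+1 z & f z = w) ->
  forall b, exists a, induced a = b.
Proof.
move=> lift [B [w [Hw HB]]]; have [z Hz fz_w] := lift w Hw.
exists (hclass_of Hz); apply: (hclass_eq (z := w)).
  by rewrite -fz_w; apply/induced_mem/hclass_of_self.
by apply/HB; split; last exact: homologous_refl.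
Qed.

End InducedMap.

Section ConeAndLink.

Local Open Scope ring_scope.

Variables (P : Type) (v : P).
Implicit Types (c d e : fchain P) (s t : seq P).

Definition starts_with s : bool :=
  if s is x :: _ then if excluded_middle_informative (x = v) then true else false
  else false.

Lemma starts_withP s : reflect (exists t, s = v :: t) (starts_with s).
Proof.
case: s => [|x t] /=; first by constructor=> -[].
case: excluded_middle_informative => [xv|neq_xv]; constructor; first by exists t; rewrite xv.
by case=> t' [].
Qed.

Lemma starts_with_cons t : starts_with (v :: t).
Proof. by apply/starts_withP; exists t. Qed.

Lemma starts_with_notin s : ~ List.In v s -> ~~ starts_with s.
Proof. by move=> vNs; apply/starts_withP => -[t st]; apply: vNs; rewrite st; left. Qed.

(* For a minimal vertex v, c is ch_cone (ch_link c) plus simplices avoiding v. *)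
Definition ch_link c : fchain P := [seq (p.1, behead p.2) | p <- c & starts_with p.2].

Definition ch_cone c : fchain P := [seq (p.1, v :: p.2) | p <- c].

Lemma ch_link_cons p c : ch_link (p :: c) =
  if starts_with p.2 then (p.1, behead p.2) :: ch_link c else ch_link c.
Proof. by rewrite /ch_link /=; case: ifP. Qed.

Lemma ch_link_cat c d : ch_link (c ++ d) = ch_link c ++ ch_link d.
Proof. by rewrite /ch_link filter_cat map_cat. Qed.

Lemma ch_link_opp c : ch_link (ch_opp c) = ch_opp (ch_link c).
Proof. by rewrite /ch_link /ch_opp filter_map -!map_comp. Qed.

Lemma ch_link_cone c : ch_link (ch_cone c) = c.
Proof.
rewrite /ch_link /ch_cone filter_map -map_comp (@eq_filter _ _ predT) ?filter_predT.
  by rewrite -[RHS]map_id; apply: eq_map => -[].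
by move=> p; exact: starts_with_cons.
Qed.

Lemma ch_cone_cat c d : ch_cone (c ++ d) = ch_cone c ++ ch_cone d.
Proof. exact: map_cat. Qed.

Lemma ch_link_In q c : List.In q (ch_link c) -> List.In (q.1, v :: q.2) c.
Proof.
elim: c => [|[x s] c IH] //; rewrite ch_link_cons /=.
by case: starts_withP => [[t ->] /= [<-|/IH]|_ /IH]; auto.
Qed.

Lemma ch_link_free c : (forall p, List.In p c -> ~ List.In v p.2) -> ch_link c = [::].
Proof.
elim: c => [|p c IH] //= free.
rewrite ch_link_cons ifN; last by apply/starts_with_notin/free; left.
by apply: IH => q Hq; apply: free; right.
Qed.

Lemma coef_link c s : coef (ch_link c) s = coef c (v :: s).
Proof.
elim: c => [|[x t] c IH]; first by rewrite !coef_nil.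
rewrite ch_link_cons coef_cons /=; case: starts_withP => [[t' ->]|notv].
  by rewrite /= coef_cons IH; congr (_ + _); apply: if_em_iff; split=> [<-|[]].
by rewrite if_emF ?add0r ?IH // => t_vs; apply: notv; exists s.
Qed.

Lemma coef_cone c s : coef (ch_cone c) s = if starts_with s then coef c (behead s) else 0.
Proof.
elim: c => [|[x t] c IH] /=; first by rewrite !coef_nil; case: ifP.
rewrite coef_cons IH /=; case: starts_withP => [[s' ->]|notv] /=.
  by rewrite coef_cons; congr (_ + _); apply: if_em_iff; split=> [[]|/= ->].
rewrite addr0 if_emF // => vt_s; apply: notv; exists t; by rewrite -vt_s.
Qed.

Lemma ch_link_eq c d : ch_eq c d -> ch_eq (ch_link c) (ch_link d).
Proof. by move=> cd s; rewrite !coef_link. Qed.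

Lemma ch_cone_eq c d : ch_eq c d -> ch_eq (ch_cone c) (ch_cone d).
Proof. by move=> cd s; rewrite !coef_cone cd. Qed.

Lemma bd_cone_simplex x t :
  bd [:: (x, v :: t)] = (x, t) :: ch_opp (ch_cone (bd [:: (x, t)])).
Proof.
rewrite /bd /= !cats0 expr0 mul1r {1}/face /= drop0; congr (_ :: _).
rewrite (iotaDl 1 0 (size t)) /ch_opp /ch_cone -!map_comp; apply: eq_map => i /=.
by rewrite /face /= exprS mulN1r mulNr.
Qed.

Lemma bd_cone c : ch_eq (bd (ch_cone c)) (c ++ ch_opp (ch_cone (bd c))).
Proof.
elim: c => [|[x t] c IH] s //.
rewrite [ch_cone _]/= bd_cons bd_cone_simplex [bd (_ :: c)]bd_cons ch_cone_cat.
by rewrite ch_opp_cat !coef_cat !coef_cons (IH s) !coef_cat addrACA.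
Qed.

Lemma ch_link_bd c : (forall p, List.In p c -> ~ List.In v (behead p.2)) ->
  ch_link (bd c) = ch_opp (bd (ch_link c)).
Proof.
elim: c => [|[x s] c IH] // vN.
rewrite bd_cons ch_link_cat IH; last by move=> q Hq; apply: vN; right.
have /= vNs := vN _ (or_introl erefl).
rewrite ch_link_cons /=; move: vNs; case: starts_withP => [[t ->] /= vNt|notv vNs].
  rewrite bd_cone_simplex ch_link_cons /= ifN; last exact/starts_with_notin.
  by rewrite ch_link_opp ch_link_cone [in RHS]bd_cons ch_opp_cat.
rewrite ch_link_free // => p; rewrite /bd /= cats0 => /List.in_map_iff [i [<- _]] /= vface.
move: vNs notv (In_face vface); case: s {vface vN} => [|y r] //= vNr notv [yv|//].
by apply: notv; exists r; rewrite yv.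
Qed.

Lemma bd_cone_filling c e :
  ch_eq (bd c) [::] -> ch_eq c (bd e) -> ch_eq (bd (ch_cone c ++ ch_opp e)) [::].
Proof.
move=> cyc_c c_bde s.
rewrite bd_cat bd_opp coef_cat coef_opp (bd_cone c s) coef_cat coef_opp.
by rewrite (ch_cone_eq cyc_c s) -(c_bde s) !coef_nil oppr0 addr0 subrr.
Qed.

Lemma chain_of_cone (V : P -> Prop) (lt : P -> P -> Prop) k c : V v ->
  (forall p y, List.In p c -> List.In y p.2 -> lt v y) ->
  chain_of V lt k c -> chain_of V lt k.+1 (ch_cone c).
Proof.
move=> Vv above Hc p /List.in_map_iff [q [<- Hq]].
by apply: simplex_cons (Hc q Hq) => // y; apply: above.
Qed.

End ConeAndLink.

Section Cosets.

Local Open Scope group_scope.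

Variable G : groupType.
Implicit Types (a x : G) (X Y H : G -> Prop).

Lemma predext X Y : (forall x, X x <-> Y x) -> X = Y.
Proof.
by move=> XY; apply: functional_extensionality => x; apply: propositional_extensionality.
Qed.

Lemma sincl_trans X Y (Z : G -> Prop) : sincl X Y -> sincl Y Z -> sincl X Z.
Proof.
move=> [XY nXY] [YZ nYZ]; split=> [x /XY /YZ //|eqXZ]; subst Z.
by apply: nXY; apply: predext => x; split=> [/XY|/YZ].
Qed.

(* [lshift a X] is the translate a^-1 X. *)
Definition lshift a X : G -> Prop := fun x => X (a * x).

Lemma lshiftK a : cancel (lshift a) (lshift a^-1).
Proof. by move=> X; apply: functional_extensionality => x; rewrite /lshift mulVKg. Qed.

Lemma lshiftVK a : cancel (lshift a^-1) (lshift a).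
Proof. by move=> X; apply: functional_extensionality => x; rewrite /lshift mulKg. Qed.

Lemma lshift_sincl a X Y : sincl X Y -> sincl (lshift a X) (lshift a Y).
Proof.
move=> [XY nXY]; split=> [x /XY //|eq_shift]; apply: nXY.
by rewrite -(lshiftK a X) eq_shift lshiftK.
Qed.

Lemma lshiftV_lcoset a H : lshift a^-1 H = lcoset a H.
Proof.
apply: predext => x; split=> [Hx|[h Hh ->]]; last by rewrite /lshift mulKg.
by exists (a^-1 * x) => //; rewrite mulVKg.
Qed.

Lemma lcoset1 a : lcoset a (fun x => x = 1) = (fun x => x = a).
Proof.
by apply: predext => x; split=> [[h -> ->]|->]; [rewrite mulg1 | exists 1; rewrite ?mulg1].
Qed.

Lemma lcoset_mem_eq a H : is_subgroup H -> forall b, lcoset a H b -> lcoset a H = lcoset b H.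
Proof.
move=> [_ [HM HV]] b [h0 Hh0 ->]; apply: predext => x; split=> [[h Hh ->]|[h Hh ->]].
  by exists (h0^-1 * h); [apply: HM (HV _ Hh0) Hh | rewrite mulgA mulgK].
by exists (h0 * h); [apply: HM | rewrite mulgA].
Qed.

Lemma coset_nonempty X : is_coset X -> exists x, X x.
Proof. by move=> [a [H [[[H1 _] _] ->]]]; exists a, 1; rewrite ?mulg1. Qed.

Variable g : G.

Lemma singleton_minimal X : is_coset X -> ~ sincl X (fun x => x = g).
Proof.
move=> /coset_nonempty [y Xy] [Xg nXg]; apply: nXg; apply: predext => x.
by split=> [/Xg //|->]; rewrite -(Xg y Xy).
Qed.

Lemma singleton_coset : (exists H, is_proper_nontrivial_subgroup H) ->
  is_coset (fun x => x = g).
Proof.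
case=> H [[[H1 _] nHT] _]; exists g, (fun x => x = 1); rewrite lcoset1.
split=> //; split.
  by split=> //; split=> [x y -> ->|x ->]; [exact: mulg1 | exact: invg1].
move=> eqT; apply: nHT; apply: predext => x; split=> // _.
by have -> : x = 1 by move: (f_equal (fun F => F x) eqT) => /= ->.
Qed.

Lemma lshift_coset_above X : is_coset X -> sincl (fun x => x = g) X ->
  is_proper_nontrivial_subgroup (lshift g X).
Proof.
move=> [a [H [HH ->]]] [gX ngX]; have [HH1 _] := HH.
rewrite (lcoset_mem_eq HH1 (gX g erefl)) -lshiftV_lcoset lshiftVK.
split=> // eqH1; apply: ngX.
by rewrite (lcoset_mem_eq HH1 (gX g erefl)) eqH1 lcoset1.
Qed.

Lemma lshiftV_subgroup_above H : is_proper_nontrivial_subgroup H ->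
  is_coset_minus g (lshift g^-1 H) /\ sincl (fun x => x = g) (lshift g^-1 H).
Proof.
move=> [HH nH1]; rewrite lshiftV_lcoset.
have ne_pt : lcoset g H <> (fun x => x = g).
  move=> eq_pt; apply: nH1; rewrite -(lshiftVK g H) lshiftV_lcoset eq_pt.
  apply: predext => x; rewrite /lshift.
  by split=> [/(canRL (mulKg g)) ->|->]; rewrite ?mulVg ?mulg1.
split; first by split; [exists g, H | ].
split=> [x ->|/esym //]; exists 1; [by case: HH => -[] | by rewrite mulg1].
Qed.

Definition coset_link (c : fchain (G -> Prop)) : fchain (G -> Prop) :=
  ch_map (lshift g) (ch_link (fun x => x = g) c).

Lemma coset_link_cat c d : coset_link (c ++ d) = coset_link c ++ coset_link d.
Proof. by rewrite /coset_link ch_link_cat ch_map_cat. Qed.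

Lemma coset_link_opp c : coset_link (ch_opp c) = ch_opp (coset_link c).
Proof. by rewrite /coset_link ch_link_opp ch_map_opp. Qed.

Lemma coset_link_eq c d : ch_eq c d -> ch_eq (coset_link c) (coset_link d).
Proof. by move=> cd; apply/(ch_map_eq (lshiftK g) (lshiftVK g))/ch_link_eq. Qed.

Lemma coset_link_bd k c : chain_of (@is_coset G) (@sincl G) k c ->
  coset_link (bd c) = ch_opp (bd (coset_link c)).
Proof.
move=> Hc; rewrite /coset_link ch_link_bd ?ch_map_opp ?bd_map // => p /Hc.
by apply: minimal_notin_behead; [exact: sincl_trans | exact: singleton_minimal].
Qed.

Lemma coset_link_chain k c : chain_of (@is_coset G) (@sincl G) k.+1 c ->
  chain_of (@is_proper_nontrivial_subgroup G) (@sincl G) k (coset_link c).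
Proof.
move=> Hc p /List.in_map_iff [q [<- Hq]]; have /= Sq' := Hc _ (ch_link_In Hq).
have [Sq _ above] := simplex_behead (@sincl_trans) Sq'.
apply: (simplex_map (lshift_sincl g) _ Sq) => X Xq.
exact: lshift_coset_above (Sq.2.1 X Xq) (above X Xq).
Qed.

Local Open Scope ring_scope.

Lemma coset_link_cycle n z : is_cycle (@is_coset G) (@sincl G) n.+2 z ->
  is_cycle (@is_proper_nontrivial_subgroup G) (@sincl G) n.+1 (coset_link z).
Proof.
case=> Hz bd_z; split=> [|s]; first exact: coset_link_chain.
have := coset_link_eq bd_z s; rewrite (coset_link_bd Hz) coef_opp !coef_nil.
by move/eqP; rewrite oppr_eq0 => /eqP.
Qed.

Lemma coset_link_homologous n z z' :
  homologous (@is_coset G) (@sincl G) n.+2 z z' ->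
  homologous (@is_proper_nontrivial_subgroup G) (@sincl G) n.+1 (coset_link z) (coset_link z').
Proof.
case=> e [He z_z'_e]; exists (ch_opp (coset_link e)); split.
  exact/chain_of_opp/coset_link_chain.
by rewrite bd_opp -(coset_link_bd He) -coset_link_opp -coset_link_cat; apply: coset_link_eq.
Qed.

Lemma lshiftV_cycle n w : is_cycle (@is_proper_nontrivial_subgroup G) (@sincl G) n.+1 w ->
  is_cycle (is_coset_minus g) (@sincl G) n.+1 (ch_map (lshift g^-1) w).
Proof.
case=> Hw bd_w; split; last by rewrite bd_map; exact: (ch_map_eq (lshiftVK g) (lshiftK g) bd_w).
by apply: chain_of_map Hw => [X Y|X /lshiftV_subgroup_above []]; first exact: lshift_sincl.
Qed.

Lemma coset_link_lift n : rhomology_trivial (is_coset_minus g) (@sincl G) n ->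
  forall w, is_cycle (@is_proper_nontrivial_subgroup G) (@sincl G) n.+1 w ->
  exists2 z, is_cycle (@is_coset G) (@sincl G) n.+2 z & coset_link z = w.
Proof.
move=> acyclic [|p0 w0] Hw; first by exists [::]; first split=> [p []|s].
(* A vertex of w shows that L(G) is nonempty, hence that {g} is a coset. *)
have [H LH] : exists H, is_proper_nontrivial_subgroup H.
  have [sz [Vp _]] := Hw.1 p0 (or_introl erefl).
  by case: p0.2 sz Vp => [|H t] // _ Vp; exists H; apply: Vp; left.
set w := p0 :: w0 in Hw *; pose w' := ch_map (lshift g^-1) w.
have Hw' := lshiftV_cycle Hw.
have [e [He w'_bde]] := acyclic w' Hw'.
exists (ch_cone (fun x => x = g) w' ++ ch_opp e).
  split; last by apply: bd_cone_filling Hw'.2 _ => s; rewrite -w'_bde coef_cat coef_nil addr0.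
  apply: chain_of_cat; last by apply/chain_of_opp/(chain_of_sub _ He) => X [].
  apply: chain_of_cone; first by apply: singleton_coset; exists H.
    move=> p Y /(List.in_map_iff _ w) [q [<- Hq]] /(List.in_map_iff _ q.2) [X [<- Xq]].
    exact: (lshiftV_subgroup_above ((Hw.1 q Hq).2.1 X Xq)).2.
  by apply: (chain_of_sub _ Hw'.1) => X [].
rewrite coset_link_cat coset_link_opp /coset_link ch_link_cone ch_link_free.
  by rewrite cats0 ch_mapK //; exact: lshiftVK.
by move=> p /He [_ [Vp _]] /Vp [].
Qed.

End Cosets.

Theorem mainTheorem11 (G : groupType) (g : G) (n : nat) :
  rhomology_trivial (@is_coset_minus G g) (@sincl G) n ->
  hom_surj (@is_coset G) (@sincl G)
           (@is_proper_nontrivial_subgroup G) (@sincl G) n.+1 n.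
Proof.
move=> acyclic.
exists (induced (@coset_link_cycle G g n) (@coset_link_homologous G g n)); split.
  exact: (induced_hadd (@coset_link_cat G g)).
exact: (induced_surj _ _ (coset_link_lift acyclic)).
Qed.
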